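(* Let $\{A_i\}_{i\in I}$ be a family of groups and $F=*_{i\in I}A_i$ their free product. Then for every $j\in\mathbb{N}$, $\mathrm{Tor}_j(F)$ equals the normal closure in $F$ of $\bigcup_{i\in I}\mathrm{Tor}_j(A_i)$, and the natural map $*_{i\in I}\big(A_i/\mathrm{Tor}_j(A_i)\big)\to F/\mathrm{Tor}_j(F)$ is an isomorphism. Furthermore $\mathrm{Tor}_\infty(F)$ equals the normal closure in $F$ of $\bigcup_{i\in I}\mathrm{Tor}_\infty(A_i)$, and the natural map $*_{i\in I}\big(A_i/\mathrm{Tor}_\infty(A_i)\big)\to F/\mathrm{Tor}_\infty(F)$ is an isomorphism.
   Context: For a group $G$, define $\mathrm{Tor}_0(G)=\{e\}$ and inductively $\mathrm{Tor}_{i+1}(G)$ to be the normal closure in $G$ of $\{g\in G : g\,\mathrm{Tor}_i(G)\text{ has finite order in } G/\mathrm{Tor}_i(G)\}$; set $\mathrm{Tor}_\infty(G)=\bigcup_{i\in\mathbb{N}}\mathrm{Tor}_i(G)$. Each $A_i$ is regarded as a subgroup of $F$ via the natural embedding. *)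

From Stdlib Require Import Arith.

Record group := Group {
  carrier :> Type;
  gmul : carrier -> carrier -> carrier;
  gone : carrier;
  ginv : carrier -> carrier;
  gmulA : forall x y z, gmul x (gmul y z) = gmul (gmul x y) z;
  gmul1l : forall x, gmul gone x = x;
  gmul1r : forall x, gmul x gone = x;
  gmulVl : forall x, gmul (ginv x) x = gone;
  gmulVr : forall x, gmul x (ginv x) = gone
}.
Arguments gmul {g}.
Arguments gone {g}.
Arguments ginv {g}.

Record hom (G H : group) := Hom {
  hom_fun :> G -> H;
  hom_mul : forall x y, hom_fun (gmul x y) = gmul (hom_fun x) (hom_fun y)
}.
Arguments hom_fun {G H}.

Fixpoint gpow {G : group} (x : G) (n : nat) : G :=
  match n with 0 => gone | S m => gmul x (gpow x m) end.

Definition is_normal_subgroup (G : group) (N : G -> Prop) : Prop :=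
  N gone /\
  (forall x y, N x -> N y -> N (gmul x y)) /\
  (forall x, N x -> N (ginv x)) /\
  (forall g x, N x -> N (gmul (gmul g x) (ginv g))).

Definition normal_closure (G : group) (S : G -> Prop) : G -> Prop :=
  fun x => forall N, is_normal_subgroup G N -> (forall s, S s -> N s) -> N x.

(* Tor_0 = {e}; Tor_{i+1} = normal closure of the elements whose image in
   G/Tor_i has finite order, i.e. g^n \in Tor_i for some n >= 1. *)
Fixpoint Tor (G : group) (i : nat) : G -> Prop :=
  match i with
  | 0 => fun x => x = gone
  | S k => normal_closure G (fun g => exists n, 0 < n /\ Tor G k (gpow g n))
  end.

Definition Tor_inf (G : group) : G -> Prop := fun x => exists i, Tor G i x.

Definition IsFreeProduct {I : Type} (A : I -> group) (F : group)
  (iota : forall i, hom (A i) F) : Prop :=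
  forall (H : group) (f : forall i, hom (A i) H),
    exists phi : hom F H,
      (forall i a, phi (iota i a) = f i a) /\
      (forall psi : hom F H, (forall i a, psi (iota i a) = f i a) ->
         forall x, psi x = phi x).

Definition IsQuotient (G : group) (N : G -> Prop) (Q : group) (pi : hom G Q) : Prop :=
  (forall q, exists x, pi x = q) /\ (forall x, pi x = gone <-> N x).

Definition bijective_hom {G H : group} (f : hom G H) : Prop :=
  (forall x y, f x = f y -> x = y) /\ (forall y, exists x, f x = y).

Definition union_image {I : Type} {A : I -> group} {F : group}
  (iota : forall i, hom (A i) F) (T : forall i, A i -> Prop) : F -> Prop :=
  fun y => exists i a, T i a /\ y = iota i a.

Definition free_product_compat {I : Type} (A : I -> group) (F : group)
  (iota : forall i, hom (A i) F) (T : forall G : group, G -> Prop) : Prop :=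
  (forall x, T F x <-> normal_closure F (union_image iota (fun i => T (A i))) x) /\
  (forall (Q : I -> group) (pi : forall i, hom (A i) (Q i))
          (P : group) (kappa : forall i, hom (Q i) P)
          (R : group) (rho : hom F R) (phi : hom P R),
     (forall i, IsQuotient (A i) (T (A i)) (Q i) (pi i)) ->
     IsFreeProduct Q P kappa ->
     IsQuotient F (T F) R rho ->
     (forall i a, phi (kappa i (pi i a)) = rho (iota i a)) ->
     bijective_hom phi).

(* Let F = *_i A_i and let N_i be normal subgroups of the factors.  Write
   N = ncl_F (U_i iota_i(N_i)).  The heart of the proof is the torsion lemma:
   if g^n lies in N for some n >= 1, then g lies in the normal closure of the
   images of the elements of the A_i that are torsion modulo N_i.  It is the
   familiar fact "torsion in a free product is conjugate into a factor",
   applied to F/N = *_i (A_i/N_i) and proved with van der Waerden's normal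
   forms: F acts on reduced words of *_i (A_i/N_i), N acts trivially, and a
   reduced word is recovered as the image of the empty word; a word whose first
   and last letters lie in different factors then has no power in N, while
   otherwise conjugation shortens it. *)

From Stdlib Require Import Arith Lia List.
From Stdlib Require Import ClassicalEpsilon FunctionalExtensionality
  PropExtensionality ProofIrrelevance.

Arguments gmulA {g}.
Arguments gmul1l {g}.
Arguments gmul1r {g}.
Arguments gmulVl {g}.
Arguments gmulVr {g}.
Arguments hom_mul {G H}.

Section GroupFacts.
Variable G : group.
Implicit Types x y z : G.

Lemma mul_left_cancel x y z : gmul x y = gmul x z -> y = z.
Proof.
  intro E. rewrite <- (gmul1l y), <- (gmul1l z), <- (gmulVl x), <- !gmulA, E.
  reflexivity.
Qed.

Lemma inv_unique x y : gmul x y = gone -> ginv x = y.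
Proof. intro E. apply (mul_left_cancel x). rewrite gmulVr, E. reflexivity. Qed.

Lemma inv_inv x : ginv (ginv x) = x.
Proof. apply inv_unique, gmulVl. Qed.

Lemma inv_mul x y : ginv (gmul x y) = gmul (ginv y) (ginv x).
Proof.
  apply inv_unique. rewrite gmulA, <- (gmulA x y), gmulVr, gmul1r, gmulVr.
  reflexivity.
Qed.

Lemma inv_one : ginv (@gone G) = gone.
Proof. apply inv_unique, gmul1l. Qed.

Lemma mulKV x y : gmul x (gmul (ginv x) y) = y.
Proof. rewrite gmulA, gmulVr, gmul1l. reflexivity. Qed.

Lemma mulVK x y : gmul (ginv x) (gmul x y) = y.
Proof. rewrite gmulA, gmulVl, gmul1l. reflexivity. Qed.

Lemma gpow_conj h x n :
  gpow (gmul (gmul h x) (ginv h)) n = gmul (gmul h (gpow x n)) (ginv h).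
Proof.
  induction n as [|n IH]; simpl.
  - rewrite gmul1r, gmulVr. reflexivity.
  - rewrite IH, <- !gmulA, mulVK. reflexivity.
Qed.

Lemma gpow_1 x : gpow x 1 = x.
Proof. apply gmul1r. Qed.

End GroupFacts.

(* Normalises a group expression: right-associates products and cancels
   adjacent inverse pairs. *)
Ltac group_simpl :=
  repeat rewrite ?inv_mul, ?inv_inv, ?inv_one, <- ?gmulA, ?mulKV, ?mulVK,
    ?gmulVr, ?gmulVl, ?gmul1l, ?gmul1r.
Ltac group_simpl_in H :=
  repeat rewrite ?inv_mul, ?inv_inv, ?inv_one, <- ?gmulA, ?mulKV, ?mulVK,
    ?gmulVr, ?gmulVl, ?gmul1l, ?gmul1r in H.

Section HomFacts.
Variables (G H : group) (f : hom G H).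

Lemma hom_one : f gone = gone.
Proof.
  apply (mul_left_cancel _ (f gone)). rewrite <- hom_mul, !gmul1r. reflexivity.
Qed.

Lemma hom_inv x : f (ginv x) = ginv (f x).
Proof.
  symmetry. apply inv_unique. rewrite <- hom_mul, gmulVr. apply hom_one.
Qed.

Lemma hom_pow x n : f (gpow x n) = gpow (f x) n.
Proof. induction n; simpl; [apply hom_one|rewrite hom_mul; congruence]. Qed.

End HomFacts.

Definition hom_id (G : group) : hom G G := Hom G G (fun x => x) (fun x y => eq_refl).

Definition hom_comp {G H K : group} (g : hom H K) (f : hom G H) : hom G K.
Proof.
  refine (Hom G K (fun x => g (f x)) _). intros. rewrite !hom_mul. reflexivity.
Defined.

Section NormalClosure.
Variable G : group.

Lemma trivial_normal : is_normal_subgroup G (fun x => x = gone).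
Proof.
  repeat split; intros; subst; group_simpl; reflexivity.
Qed.

Lemma conj_inv_mem (N : G -> Prop) : is_normal_subgroup G N ->
  forall g x, N x -> N (gmul (ginv g) (gmul x g)).
Proof.
  intros (_ & _ & _ & Nconj) g x Hx.
  specialize (Nconj (ginv g) x Hx). rewrite inv_inv, <- gmulA in Nconj. exact Nconj.
Qed.

Lemma normal_unconj (N : G -> Prop) : is_normal_subgroup G N ->
  forall h x, N (gmul (gmul h x) (ginv h)) -> N x.
Proof.
  intros HN h x Hx. apply (conj_inv_mem N HN h) in Hx. group_simpl_in Hx. exact Hx.
Qed.

Lemma ncl_normal S : is_normal_subgroup G (normal_closure G S).
Proof.
  unfold normal_closure. repeat split.
  - intros N (N1 & _) _. exact N1.
  - intros x y Hx Hy N HN HS. apply HN; [apply Hx|apply Hy]; auto.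
  - intros x Hx N HN HS. apply HN, Hx; auto.
  - intros g x Hx N HN HS. apply HN, Hx; auto.
Qed.

Lemma ncl_incl (S : G -> Prop) x : S x -> normal_closure G S x.
Proof. intros Hx N _ HS. auto. Qed.

Lemma ncl_min (S N : G -> Prop) : is_normal_subgroup G N ->
  (forall s, S s -> N s) -> forall x, normal_closure G S x -> N x.
Proof. intros HN HS x Hx. apply Hx; auto. Qed.

Lemma ncl_mono (S T : G -> Prop) : (forall s, S s -> T s) ->
  forall x, normal_closure G S x -> normal_closure G T x.
Proof.
  intro HST. apply ncl_min; [apply ncl_normal|]. intros s Hs. apply ncl_incl; auto.
Qed.

End NormalClosure.

Lemma preimage_normal (G H : group) (f : hom G H) (N : H -> Prop) :
  is_normal_subgroup H N -> is_normal_subgroup G (fun x => N (f x)).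
Proof.
  intros (N1 & Nmul & Ninv & Nconj). repeat split.
  - rewrite hom_one. exact N1.
  - intros. rewrite hom_mul. auto.
  - intros. rewrite hom_inv. auto.
  - intros. rewrite !hom_mul, hom_inv. auto.
Qed.

Section Congruence.
Variables (G : group) (N : G -> Prop).
Hypothesis HN : is_normal_subgroup G N.

Definition congr_mod (x y : G) : Prop := N (gmul (ginv x) y).

Lemma congr_refl x : congr_mod x x.
Proof. unfold congr_mod. rewrite gmulVl. apply HN. Qed.

Lemma congr_sym x y : congr_mod x y -> congr_mod y x.
Proof.
  unfold congr_mod. intro H. apply HN in H. group_simpl_in H. exact H.
Qed.

Lemma congr_trans x y z : congr_mod x y -> congr_mod y z -> congr_mod x z.
Proof.
  unfold congr_mod. intros H1 H2. pose proof (proj1 (proj2 HN) _ _ H1 H2) as H.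
  group_simpl_in H. exact H.
Qed.

Lemma congr_mul x x' y y' :
  congr_mod x x' -> congr_mod y y' -> congr_mod (gmul x y) (gmul x' y').
Proof.
  unfold congr_mod. intros H1 H2.
  pose proof (proj1 (proj2 HN) _ _ (conj_inv_mem G N HN y _ H1) H2) as H.
  group_simpl_in H. group_simpl. exact H.
Qed.

Lemma congr_pow x y n : congr_mod x y -> congr_mod (gpow x n) (gpow y n).
Proof.
  intro. induction n; simpl; [apply congr_refl|apply congr_mul; auto].
Qed.

Lemma congr_mem (M : G -> Prop) : is_normal_subgroup G M ->
  (forall z, N z -> M z) -> forall x y, congr_mod x y -> M y -> M x.
Proof.
  intros HM NM x y Hxy Hy. apply congr_sym, NM in Hxy.
  pose proof (proj1 (proj2 HM) _ _ Hy Hxy) as H. group_simpl_in H. exact H.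
Qed.

Lemma congr_pow_mem x y n : congr_mod x y -> N (gpow x n) -> N (gpow y n).
Proof.
  intros Hxy Hx. apply (congr_mem N HN (fun _ H => H) _ (gpow x n)); auto.
  apply congr_pow, congr_sym, Hxy.
Qed.

End Congruence.

Lemma Tor_normal G j : is_normal_subgroup G (Tor G j).
Proof. destruct j; simpl; [apply trivial_normal|apply ncl_normal]. Qed.

Lemma Tor_succ G j x : Tor G j x -> Tor G (S j) x.
Proof. intro H. apply ncl_incl. exists 1. rewrite gpow_1. auto. Qed.

Lemma Tor_mono G j k x : j <= k -> Tor G j x -> Tor G k x.
Proof. induction 1; auto using Tor_succ. Qed.

Lemma Tor_hom G H (f : hom G H) j x : Tor G j x -> Tor H j (f x).
Proof.
  revert x. induction j as [|j IH]; simpl; intros x Hx.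
  - subst. apply hom_one.
  - revert x Hx. apply (ncl_min G _ (fun x => normal_closure H _ (f x))).
    + apply preimage_normal, ncl_normal.
    + intros s [n [Hn Hs]]. apply ncl_incl. exists n. rewrite <- hom_pow. auto.
Qed.

Lemma Tor_inf_normal G : is_normal_subgroup G (Tor_inf G).
Proof.
  repeat split.
  - exists 0. reflexivity.
  - intros x y [j Hx] [k Hy]. exists (j + k).
    apply Tor_normal; [apply (Tor_mono G j)|apply (Tor_mono G k)]; auto; lia.
  - intros x [j Hx]. exists j. apply Tor_normal; auto.
  - intros g x [j Hx]. exists j. apply Tor_normal; auto.
Qed.

(* The subgroup
   of words in the generators is itself a group receiving the factors, so the
   universal property yields a retraction F -> Gen onto it. *)
Inductive Gen {I : Type} {A : I -> group} {F : group}
  (iota : forall i, hom (A i) F) : F -> Prop :=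
| Gen_one : Gen iota gone
| Gen_cons : forall i a x, Gen iota x -> Gen iota (gmul (iota i a) x).

Section Generation.
Variables (I : Type) (A : I -> group) (F : group) (iota : forall i, hom (A i) F).

Lemma Gen_mul x y : Gen iota x -> Gen iota y -> Gen iota (gmul x y).
Proof.
  induction 1; intros; [rewrite gmul1l|rewrite <- gmulA; constructor]; auto.
Qed.

Lemma Gen_iota i a : Gen iota (iota i a).
Proof. rewrite <- (gmul1r (iota i a)). repeat constructor. Qed.

Lemma Gen_inv x : Gen iota x -> Gen iota (ginv x).
Proof.
  induction 1.
  - rewrite inv_one. constructor.
  - rewrite inv_mul, <- hom_inv. apply Gen_mul; auto using Gen_iota.
Qed.

Definition GenGroup : group.
Proof.
  refine (Group { x : F | Gen iota x }
    (fun x y => exist _ (gmul (proj1_sig x) (proj1_sig y))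
                  (Gen_mul _ _ (proj2_sig x) (proj2_sig y)))
    (exist _ gone (Gen_one _))
    (fun x => exist _ (ginv (proj1_sig x)) (Gen_inv _ (proj2_sig x))) _ _ _ _ _);
  intros; apply eq_sig_hprop; auto using proof_irrelevance; simpl.
  - apply gmulA.
  - apply gmul1l.
  - apply gmul1r.
  - apply gmulVl.
  - apply gmulVr.
Defined.

Definition gen_hom i : hom (A i) GenGroup.
Proof.
  refine (Hom (A i) GenGroup (fun a => exist _ (iota i a) (Gen_iota i a)) _).
  intros. apply eq_sig_hprop; auto using proof_irrelevance. apply hom_mul.
Defined.

Definition gen_incl : hom GenGroup F :=
  Hom GenGroup F (fun x => proj1_sig x) (fun x y => eq_refl).

Hypothesis HF : IsFreeProduct A F iota.

Lemma free_product_hom_ext (H : group) (f g : hom F H) :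
  (forall i a, f (iota i a) = g (iota i a)) -> forall x, f x = g x.
Proof.
  intros E. destruct (HF H (fun i => hom_comp f (iota i)))
    as [phi [_ Huniq]].
  intro x. rewrite (Huniq f), (Huniq g); simpl; auto.
Qed.

Lemma free_product_generated x : Gen iota x.
Proof.
  destruct (HF GenGroup gen_hom) as [r [Hr _]].
  assert (Hret : forall y, gen_incl (r y) = y).
  { apply (free_product_hom_ext F (hom_comp gen_incl r) (hom_id F)).
    intros i a. simpl. rewrite Hr. reflexivity. }
  rewrite <- (Hret x). apply (proj2_sig (r x)).
Qed.

Lemma free_product_ind (P : F -> Prop) : P gone ->
  (forall i a x, P x -> P (gmul (iota i a) x)) -> forall x, P x.
Proof. intros H1 Hcons x. induction (free_product_generated x); auto. Qed.

End Generation.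

(* Its inverse is induced by the map
   F -> *_i (A_i/N_i), which kills N_F and is onto. *)
Lemma free_product_of_quotients I (A : I -> group) F (iota : forall i, hom (A i) F)
  (NA : forall i, A i -> Prop) (NF : F -> Prop) :
  IsFreeProduct A F iota ->
  (forall x, NF x <-> normal_closure F (union_image iota NA) x) ->
  forall (Q : I -> group) (pi : forall i, hom (A i) (Q i))
         (P : group) (kappa : forall i, hom (Q i) P)
         (R : group) (rho : hom F R) (phi : hom P R),
    (forall i, IsQuotient (A i) (NA i) (Q i) (pi i)) ->
    IsFreeProduct Q P kappa ->
    IsQuotient F NF R rho ->
    (forall i a, phi (kappa i (pi i a)) = rho (iota i a)) ->
    bijective_hom phi.
Proof.
  intros HF HNF Q pi P kappa R rho phi HQ HP [rho_onto rho_ker] Hphi.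
  destruct (HF P (fun i => hom_comp (kappa i) (pi i)))
    as [psi [Hpsi _]].
  assert (phi_psi : forall x, phi (psi x) = rho x).
  { apply (free_product_hom_ext I A F iota HF R (hom_comp phi psi) rho).
    intros. simpl. rewrite Hpsi. simpl. auto. }
  assert (psi_onto : forall p, exists x, psi x = p).
  { apply (free_product_ind I Q P kappa HP).
    - exists gone. apply hom_one.
    - intros i q p [x Hx]. destruct (proj1 (HQ i) q) as [a Ha].
      exists (gmul (iota i a) x). rewrite hom_mul, Hpsi, Hx. simpl. rewrite Ha. auto. }
  assert (psi_kills : forall x, NF x -> psi x = gone).
  { intros x Hx. apply HNF in Hx. revert x Hx.
    apply (ncl_min F _ (fun x => psi x = gone)).
    - apply (preimage_normal _ _ psi (fun y => y = gone)), trivial_normal.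
    - intros s [i [a [Ha ->]]]. rewrite Hpsi. simpl.
      apply (proj2 (HQ i)) in Ha. rewrite Ha. apply hom_one. }
  split.
  - intros p q Hpq. destruct (psi_onto p) as [x <-], (psi_onto q) as [y <-].
    rewrite !phi_psi in Hpq.
    assert (Hxy : rho (gmul (ginv x) y) = gone).
    { rewrite hom_mul, hom_inv, Hpq. apply gmulVl. }
    apply rho_ker, psi_kills in Hxy. rewrite hom_mul, hom_inv in Hxy.
    apply (mul_left_cancel _ (ginv (psi x))). rewrite Hxy, gmulVl. reflexivity.
  - intro r. destruct (rho_onto r) as [x <-]. exists (psi x). apply phi_psi.
Qed.

(* A letter is an element
   of some A_i outside N_i that is the chosen representative of its coset;
   a word is reduced when consecutive letters come from different factors. *)
Section ReducedWords.
Variables (I : Type) (A : I -> group) (NA : forall i, A i -> Prop).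
Hypothesis HNA : forall i, is_normal_subgroup (A i) (NA i).

Notation cong i := (congr_mod (A i) (NA i)).

Definition canon i (x : A i) : A i := epsilon (inhabits gone) (fun y => cong i x y).

Lemma canon_spec i x : cong i x (canon i x).
Proof. unfold canon. apply epsilon_spec. exists x. apply congr_refl, HNA. Qed.

Lemma canon_congr i x y : cong i x y -> canon i x = canon i y.
Proof.
  intro Hxy. unfold canon. f_equal. extensionality z.
  apply propositional_extensionality. split; intro Hz.
  - apply (congr_trans _ _ (HNA i) _ x); auto. apply congr_sym; auto.
  - apply (congr_trans _ _ (HNA i) _ y); auto.
Qed.

Lemma canon_idem i x : canon i (canon i x) = canon i x.
Proof. apply canon_congr, congr_sym, canon_spec; auto. Qed.

Definition letter := { i : I & A i }.

Definition reduced_letter (l : letter) : Prop :=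
  ~ NA (projT1 l) (projT2 l) /\ canon _ (projT2 l) = projT2 l.

Definition head_not_in (i : I) (w : list letter) : Prop :=
  match w with nil => True | l :: _ => projT1 l <> i end.

Fixpoint reduced (w : list letter) : Prop :=
  match w with
  | nil => True
  | l :: w' => reduced_letter l /\ head_not_in (projT1 l) w' /\ reduced w'
  end.

(* Prefix x (representing the coset of x in A_i/N_i) to a word not starting
   in factor i. *)
Definition push i (x : A i) (w : list letter) : list letter :=
  if excluded_middle_informative (NA i x) then w else existT _ i (canon i x) :: w.

Definition act i (a : A i) (w : list letter) : list letter :=
  match w with
  | nil => push i a nil
  | l :: w' =>
      match excluded_middle_informative (projT1 l = i) with
      | left e => push i (gmul a (eq_rect _ A (projT2 l) _ e)) w'
      | right _ => push i a w
      end
  end.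

Lemma act_same i a c w : act i a (existT _ i c :: w) = push i (gmul a c) w.
Proof.
  simpl. destruct (excluded_middle_informative (i = i)) as [e|]; [|congruence].
  replace e with (eq_refl i) by apply proof_irrelevance. reflexivity.
Qed.

Lemma act_other i a w : head_not_in i w -> act i a w = push i a w.
Proof.
  destruct w as [|l w]; simpl; auto. intro H.
  destruct (excluded_middle_informative (projT1 l = i)); [congruence|auto].
Qed.

Lemma push_in i x w : NA i x -> push i x w = w.
Proof. unfold push. destruct (excluded_middle_informative _); tauto. Qed.

Lemma push_out i x w : ~ NA i x -> push i x w = existT _ i (canon i x) :: w.
Proof. unfold push. destruct (excluded_middle_informative _); tauto. Qed.

Lemma push_congr i x y w : cong i x y -> push i x w = push i y w.
Proof.
  intro Hxy. unfold push.
  destruct (excluded_middle_informative (NA i x)) as [hx|hx],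
           (excluded_middle_informative (NA i y)) as [hy|hy]; auto.
  - exfalso. apply hy. apply (congr_mem _ _ (HNA i) _ (HNA i)) with x; auto.
    apply congr_sym; auto.
  - exfalso. apply hx. apply (congr_mem _ _ (HNA i) _ (HNA i)) with y; auto.
  - rewrite (canon_congr i x y Hxy). reflexivity.
Qed.

Lemma push_length i x w : length (push i x w) <= S (length w).
Proof. unfold push. destruct (excluded_middle_informative _); simpl; lia. Qed.

Lemma reduced_push i x w : reduced w -> head_not_in i w -> reduced (push i x w).
Proof.
  intros Hw Hh. unfold push. destruct (excluded_middle_informative _) as [|hx]; auto.
  repeat split; auto; simpl.
  - intro H. apply hx. apply (congr_mem _ _ (HNA i) _ (HNA i)) with (canon i x); auto.
    apply canon_spec.
  - apply canon_idem.
Qed.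

Lemma act_reduced i a w : reduced w -> reduced (act i a w).
Proof.
  intro Hw. destruct w as [|[j c] w'].
  - apply reduced_push; simpl; auto.
  - destruct (excluded_middle_informative (j = i)) as [<-|n].
    + rewrite act_same. destruct Hw as (_ & Hh & Hw'). apply reduced_push; auto.
    + rewrite act_other by (simpl; auto). apply reduced_push; simpl; auto.
Qed.

Lemma act_length_same i a l w :
  projT1 l = i -> length (act i a (l :: w)) <= length (l :: w).
Proof.
  destruct l as [j c]. intros E; simpl in E; subst j. rewrite act_same. apply push_length.
Qed.

Lemma act_mul i a b w : reduced w -> act i a (act i b w) = act i (gmul a b) w.
Proof.
  intro Hw.
  assert (Hcase : (exists c w', w = existT _ i c :: w' /\ head_not_in i w') \/
                  head_not_in i w).
  { destruct w as [|[j c] w']; [right; simpl; auto|].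
    destruct (excluded_middle_informative (j = i)) as [<-|n]; [|right; simpl; auto].
    left. exists c, w'. split; [reflexivity|apply Hw]. }
  destruct Hcase as [(c & w' & -> & Hh)|Hh].
  - rewrite !act_same.
    destruct (excluded_middle_informative (NA i (gmul b c))) as [h|h].
    + rewrite push_in, act_other by auto. apply push_congr.
      unfold congr_mod. group_simpl. auto.
    + rewrite push_out, act_same by auto. apply push_congr.
      rewrite <- gmulA. apply congr_mul; [apply HNA|apply congr_refl, HNA|].
      apply congr_sym, canon_spec; auto.
  - rewrite !(act_other i _ w Hh).
    destruct (excluded_middle_informative (NA i b)) as [h|h].
    + rewrite push_in, act_other by auto. apply push_congr.
      unfold congr_mod. group_simpl. auto.
    + rewrite push_out, act_same by auto. apply push_congr.
      apply congr_mul; [apply HNA|apply congr_refl, HNA|].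
      apply congr_sym, canon_spec; auto.
Qed.

Lemma act_trivial i a w : NA i a -> reduced w -> act i a w = w.
Proof.
  intros Ha Hw. destruct w as [|[j c] w'].
  - apply push_in. auto.
  - destruct (excluded_middle_informative (j = i)) as [<-|n].
    + rewrite act_same. destruct Hw as ((Hc & Hcanon) & _ & _). simpl in *.
      rewrite <- (push_congr j c) by (unfold congr_mod; apply conj_inv_mem; auto).
      rewrite push_out, Hcanon by auto. reflexivity.
    + rewrite act_other by (simpl; auto). apply push_in. auto.
Qed.

Lemma reduced_prefix u v : reduced (u ++ v) -> reduced u.
Proof.
  induction u as [|l u IH]; simpl; auto. intros (Hl & Hh & Hr).
  split; [exact Hl|split; [|auto]]. destruct u; simpl in *; auto.
Qed.

Lemma reduced_join x l v : reduced (x ++ l :: nil) -> reduced (l :: v) -> reduced (x ++ l :: v).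
Proof.
  induction x as [|m x IH]; simpl; intros Hx Hv; [apply Hv|].
  destruct Hx as (Hm & Hh & Hx). split; [exact Hm|split; [|auto]].
  destruct x; apply Hh.
Qed.

Fixpoint word_pow (n : nat) (u : list letter) : list letter :=
  match n with 0 => nil | S m => u ++ word_pow m u end.

Lemma word_pow_reduced l x l' n :
  reduced (l :: x ++ l' :: nil) -> projT1 l' <> projT1 l ->
  reduced (word_pow n (l :: x ++ l' :: nil)).
Proof.
  intros Hu Hll'.
  assert (Hl' : reduced_letter l').
  { clear -Hu. revert l Hu.
    induction x as [|m x IHx]; intros l Hu; simpl in Hu; [tauto|apply (IHx m); simpl; tauto]. }
  set (u := l :: x ++ l' :: nil) in *.
  induction n as [|n IH]; [exact Logic.I|].
  change (reduced (u ++ word_pow n u)).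
  replace (u ++ word_pow n u) with ((l :: x) ++ l' :: word_pow n u)
    by (subst u; simpl; rewrite <- app_assoc; reflexivity).
  apply reduced_join; [exact Hu|].
  split; [exact Hl'|split; [|exact IH]]. destruct n; simpl; auto.
Qed.

End ReducedWords.

Section Symmetric.
Variable W : Type.

Record perm := Perm {
  perm_fun : W -> W; perm_inv : W -> W;
  perm_funK : forall x, perm_fun (perm_inv x) = x;
  perm_invK : forall x, perm_inv (perm_fun x) = x }.

Lemma perm_ext p q : (forall x, perm_fun p x = perm_fun q x) ->
  (forall x, perm_inv p x = perm_inv q x) -> p = q.
Proof.
  destruct p as [f1 g1 a1 b1], q as [f2 g2 a2 b2]; simpl. intros E1 E2.
  apply functional_extensionality in E1, E2. subst.
  f_equal; apply proof_irrelevance.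
Qed.

Definition perm_mul (p q : perm) : perm.
Proof.
  refine (Perm (fun x => perm_fun p (perm_fun q x)) (fun x => perm_inv q (perm_inv p x)) _ _);
  intro x; rewrite ?perm_funK, ?perm_invK; reflexivity.
Defined.

Definition SymGroup : group.
Proof.
  refine (Group perm perm_mul
    (Perm (fun x => x) (fun x => x) (fun x => eq_refl) (fun x => eq_refl))
    (fun p => Perm (perm_inv p) (perm_fun p) (perm_invK p) (perm_funK p)) _ _ _ _ _);
  intros; apply perm_ext; simpl; intros; auto using perm_funK, perm_invK.
Defined.

End Symmetric.

Section TorsionLemma.
Variables (I : Type) (A : I -> group) (F : group) (iota : forall i, hom (A i) F).
Hypothesis HF : IsFreeProduct A F iota.
Variable NA : forall i, A i -> Prop.
Hypothesis HNA : forall i, is_normal_subgroup (A i) (NA i).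

Definition torsion_mod i (a : A i) : Prop := exists m, 0 < m /\ NA i (gpow a m).

Let N := normal_closure F (union_image iota NA).
Let NT := normal_closure F (union_image iota torsion_mod).
Let HN : is_normal_subgroup F N := ncl_normal F _.
Let HNT : is_normal_subgroup F NT := ncl_normal F _.

(* N_i consists of elements torsion modulo N_i (exponent 1), so N <= NT. *)
Lemma N_sub_NT x : N x -> NT x.
Proof.
  apply ncl_mono. intros s [i [a [Ha ->]]]. exists i, a. split; auto.
  exists 1. rewrite gpow_1. auto.
Qed.

Notation word := (list (letter I A)).
Notation reducedw := (reduced I A NA).

Fixpoint eval (w : word) : F :=
  match w with nil => gone | l :: w' => gmul (iota (projT1 l) (projT2 l)) (eval w') end.

Lemma eval_app u v : eval (u ++ v) = gmul (eval u) (eval v).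
Proof. induction u; simpl; [rewrite gmul1l|rewrite IHu, gmulA]; reflexivity. Qed.

Lemma eval_word_pow n u : eval (word_pow I A n u) = gpow (eval u) n.
Proof. induction n; simpl; [|rewrite eval_app, IHn]; reflexivity. Qed.

Definition RW := { w : word | reducedw w }.
Definition empty_word : RW := exist _ nil Logic.I.

Definition act_rw i (a : A i) (w : RW) : RW :=
  exist _ (act I A NA i a (proj1_sig w)) (act_reduced I A NA HNA i a _ (proj2_sig w)).

Lemma act_rw_mul i a b w : act_rw i a (act_rw i b w) = act_rw i (gmul a b) w.
Proof.
  apply eq_sig_hprop; [intros; apply proof_irrelevance|].
  apply act_mul, proj2_sig; auto.
Qed.

Lemma act_rw_one i w : act_rw i gone w = w.
Proof.
  apply eq_sig_hprop; [intros; apply proof_irrelevance|].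
  apply act_trivial, proj2_sig; auto. apply HNA.
Qed.

Definition factor_perm i (a : A i) : perm RW.
Proof.
  refine (Perm RW (act_rw i a) (act_rw i (ginv a)) _ _); intro w.
  - rewrite act_rw_mul, gmulVr. apply act_rw_one.
  - rewrite act_rw_mul, gmulVl. apply act_rw_one.
Defined.

Definition factor_action i : hom (A i) (SymGroup RW).
Proof.
  refine (Hom (A i) (SymGroup RW) (factor_perm i) _). intros a b.
  apply perm_ext; simpl; intros; rewrite act_rw_mul, ?inv_mul; reflexivity.
Defined.

Definition Phi : hom F (SymGroup RW) :=
  proj1_sig (constructive_indefinite_description _ (HF (SymGroup RW) factor_action)).

Lemma Phi_iota i a : Phi (iota i a) = factor_action i a.
Proof.
  unfold Phi. destruct (constructive_indefinite_description _ _) as [phi Hphi].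
  apply (proj1 Hphi).
Qed.

Lemma Phi_eval_empty u : reducedw u ->
  proj1_sig (perm_fun _ (Phi (eval u)) empty_word) = u.
Proof.
  induction u as [|[i c] u IH]; intro Hu.
  - simpl. rewrite hom_one. reflexivity.
  - simpl eval. rewrite hom_mul, Phi_iota. simpl.
    destruct Hu as ((Hc & Hcanon) & Hh & Hu). simpl in *.
    rewrite IH, act_other, push_out, Hcanon by auto. reflexivity.
Qed.

Lemma N_acts_trivially x : N x -> forall w, perm_fun _ (Phi x) w = w.
Proof.
  revert x. apply (ncl_min F _ (fun x => forall w, perm_fun _ (Phi x) w = w)).
  - repeat split.
    + intro w. rewrite hom_one. reflexivity.
    + intros x y Hx Hy w. rewrite hom_mul. simpl. rewrite Hy, Hx. reflexivity.
    + intros x Hx w. rewrite hom_inv. simpl.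
      rewrite <- (Hx w) at 1. apply perm_invK.
    + intros g x Hx w. rewrite !hom_mul, hom_inv. simpl. rewrite Hx. apply perm_funK.
  - intros s [i [a [Ha ->]]] w. rewrite Phi_iota.
    apply eq_sig_hprop; [intros; apply proof_irrelevance|].
    apply act_trivial, proj2_sig; auto.
Qed.

Lemma reduced_in_N_nil u : reducedw u -> N (eval u) -> u = nil.
Proof.
  intros Hu HuN. rewrite <- (Phi_eval_empty u Hu), N_acts_trivially; auto.
Qed.

Lemma iota_in_N i a : N (iota i a) -> NA i a.
Proof.
  intro Ha. pose proof (N_acts_trivially _ Ha empty_word) as E.
  apply (f_equal (@proj1_sig _ _)) in E. rewrite Phi_iota in E. simpl in E.
  unfold push in E. destruct (excluded_middle_informative _); [auto|discriminate].
Qed.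

Notation congN := (congr_mod F N).

Lemma eval_push i x w : congN (eval (push I A NA i x w)) (gmul (iota i x) (eval w)).
Proof.
  unfold push. destruct (excluded_middle_informative _) as [h|h].
  - unfold congr_mod. apply conj_inv_mem; [exact HN|].
    apply ncl_incl. exists i, x. auto.
  - simpl. apply congr_mul; [exact HN| |apply congr_refl, HN].
    unfold congr_mod. rewrite <- hom_inv, <- hom_mul. apply ncl_incl.
    exists i, (gmul (ginv (canon I A NA i x)) x). split; [|reflexivity].
    apply congr_sym, canon_spec; auto.
Qed.

Lemma eval_act i a w : reducedw w ->
  congN (eval (act I A NA i a w)) (gmul (iota i a) (eval w)).
Proof.
  intro Hw. destruct w as [|[j c] w'].
  - apply eval_push.
  - destruct (excluded_middle_informative (j = i)) as [<-|n].
    + rewrite act_same. eapply congr_trans; [exact HN|apply eval_push|].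
      simpl. rewrite hom_mul, gmulA. apply congr_refl, HN.
    + rewrite act_other by (simpl; auto). apply eval_push.
Qed.

Lemma normal_form_exists g : exists u, reducedw u /\ congN g (eval u).
Proof.
  revert g. apply (free_product_ind I A F iota HF).
  - exists nil. split; [exact Logic.I|apply congr_refl, HN].
  - intros i a x [u [Hu Hx]]. exists (act I A NA i a u).
    split; [apply act_reduced; auto|].
    eapply congr_trans; [exact HN| |apply congr_sym, eval_act; auto; exact HN].
    apply congr_mul; auto using congr_refl.
Qed.

Section PowerInN.
Variable n : nat.
Hypothesis Hn : 0 < n.

Lemma torsion_letter i c : N (gpow (iota i c) n) -> NT (iota i c).
Proof.
  intro H. rewrite <- hom_pow in H. apply ncl_incl. exists i, c. split; auto.
  exists n. auto using iota_in_N.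
Qed.

Lemma cyclically_reduced_power l x l' :
  reducedw (l :: x ++ l' :: nil) -> projT1 l' <> projT1 l ->
  ~ N (gpow (eval (l :: x ++ l' :: nil)) n).
Proof.
  intros Hu Hll' HuN. rewrite <- eval_word_pow in HuN.
  destruct n as [|n']; [lia|].
  apply reduced_in_N_nil in HuN; [discriminate|].
  apply word_pow_reduced; auto.
Qed.

Lemma shorten_by_conjugation l x i d :
  reducedw (l :: x ++ existT _ i d :: nil) -> projT1 l = i ->
  exists u', reducedw u' /\ length u' < length (l :: x ++ existT _ i d :: nil) /\
    congN (gmul (gmul (iota i d) (eval (l :: x ++ existT _ i d :: nil))) (ginv (iota i d)))
          (eval u').
Proof.
  intros Hu Hl. exists (act I A NA i d (l :: x)). repeat split.
  - apply act_reduced; auto. apply (reduced_prefix I A NA (l :: x) _ Hu).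
  - pose proof (act_length_same I A NA i d l x Hl) as Hlen.
    simpl length in *. rewrite length_app in *. simpl in *. lia.
  - eapply congr_trans; [exact HN| |apply congr_sym, eval_act; [exact HN|]].
    + change (l :: x ++ existT _ i d :: nil) with ((l :: x) ++ existT _ i d :: nil).
      rewrite eval_app. simpl. group_simpl. apply congr_refl, HN.
    + apply (reduced_prefix I A NA (l :: x) _ Hu).
Qed.

Lemma torsion_words k : forall u, length u <= k -> reducedw u ->
  N (gpow (eval u) n) -> NT (eval u).
Proof.
  induction k as [|k IH]; intros u Hlen Hu HuN.
  - destruct u; [apply HNT|simpl in Hlen; lia].
  - destruct u as [|l [|l2 u3]].
    + apply HNT.
    + destruct l as [i c]. simpl. rewrite gmul1r.
      simpl in HuN. rewrite gmul1r in HuN. apply torsion_letter; auto.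
    + destruct (exists_last (l := l2 :: u3) ltac:(discriminate)) as [x [[i d] E]].
      rewrite E in *.
      destruct (excluded_middle_informative (projT1 l = i)) as [Hl|Hl].
      * destruct (shorten_by_conjugation l x i d Hu Hl) as (u' & Hu' & Hlen' & Hconj).
        apply (normal_unconj F NT HNT (iota i d)).
        apply (congr_mem F N HN NT HNT N_sub_NT _ _ Hconj).
        apply (IH u'); auto; [apply Nat.lt_succ_r; exact (Nat.lt_le_trans _ _ _ Hlen' Hlen)|].
        apply (congr_pow_mem F N HN _ _ n Hconj).
        rewrite gpow_conj. apply HN, HuN.
      * exfalso. apply (cyclically_reduced_power l x (existT _ i d)); auto.
Qed.

Lemma torsion_lemma g : N (gpow g n) -> NT g.
Proof.
  intro HgN. destruct (normal_form_exists g) as [u [Hu Hgu]].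
  apply (congr_mem F N HN NT HNT N_sub_NT _ _ Hgu).
  exact (torsion_words (length u) u (le_n _) Hu (congr_pow_mem F N HN _ _ n Hgu HgN)).
Qed.

End PowerInN.
End TorsionLemma.

(* The
   inclusion from right to left is functoriality.  For the other one, by
   induction on j: an element with a power in Tor_j(F) lies, by the torsion
   lemma for N_i = Tor_j(A_i), in the normal closure of the images of the
   elements torsion modulo Tor_j(A_i), and these belong to Tor_{j+1}(A_i). *)
Lemma Tor_free_product I (A : I -> group) F (iota : forall i, hom (A i) F) :
  IsFreeProduct A F iota -> forall j x,
  Tor F j x <-> normal_closure F (union_image iota (fun i => Tor (A i) j)) x.
Proof.
  intros HF j x. split.
  - revert x. induction j as [|j IH]; intros x Hx.
    + simpl in Hx. subst. apply ncl_normal.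
    + revert x Hx. apply ncl_min; [apply ncl_normal|].
      intros g [n [Hn Hg]]. apply IH in Hg.
      apply (ncl_mono F (union_image iota (torsion_mod I A (fun i => Tor (A i) j)))).
      { intros s [i [a [Ha ->]]]. exists i, a. split; [apply ncl_incl, Ha|reflexivity]. }
      exact (torsion_lemma I A F iota HF _ (fun i => Tor_normal (A i) j) n Hn g Hg).
  - revert x. apply ncl_min; [apply Tor_normal|].
    intros s [i [a [Ha ->]]]. apply Tor_hom, Ha.
Qed.

(* The same description for Tor_oo, since each Tor_j(F) is the normal
   closure of the images of the Tor_j(A_i). *)
Lemma Tor_inf_free_product I (A : I -> group) F (iota : forall i, hom (A i) F) :
  IsFreeProduct A F iota -> forall x,
  Tor_inf F x <-> normal_closure F (union_image iota (fun i => Tor_inf (A i))) x.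
Proof.
  intros HF x. split.
  - intros [j Hj]. apply (Tor_free_product I A F iota HF) in Hj. revert x Hj.
    apply ncl_mono. intros s [i [a [Ha ->]]]. exists i, a. split; [exists j; exact Ha|reflexivity].
  - revert x. apply ncl_min; [apply Tor_inf_normal|].
    intros s [i [a [[j Ha] ->]]]. exists j. apply Tor_hom, Ha.
Qed.

Theorem proposition3p14 (I : Type) (A : I -> group) (F : group)
  (iota : forall i, hom (A i) F) :
  IsFreeProduct A F iota ->
  (forall j : nat, free_product_compat A F iota (fun G => Tor G j)) /\
  free_product_compat A F iota Tor_inf.
Proof.
  intro HF. split; [intro j|]; split.
  - apply Tor_free_product, HF.
  - apply (free_product_of_quotients I A F iota _ _ HF), Tor_free_product, HF.
  - apply Tor_inf_free_product, HF.
  - apply (free_product_of_quotients I A F iota _ _ HF), Tor_inf_free_product, HF.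
Qed.
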